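(* In a finite dynamic game as described in the context, suppose $K^i$ is unilaterally sufficient information for player $i$, with associated functions $F_t^{i,g^i}$. Let $g=(g^j)_{j\in\mathcal{I}}$ be a fully mixed behavioral strategy profile and let $\rho^i$ be the $K^i$-based strategy $$\rho_t^i(u_t^i\mid k_t^i)=\sum_{\tilde h_t^i}g_t^i(u_t^i\mid\tilde h_t^i)\,F_t^{i,g^i}(\tilde h_t^i\mid k_t^i).$$ Then for every $j\in\mathcal{I}\setminus\{i\}$ and all $h_t^j\in\mathcal{H}_t^j$, $u_t^j\in\mathcal{U}_t^j$ (for which the conditional quantities are defined): (1) $\Pr^g(\tilde h_{t+1}^j\mid h_t^j,u_t^j)=\Pr^{\rho^i,g^{-i}}(\tilde h_{t+1}^j\mid h_t^j,u_t^j)$ for all $t<T$ and all $\tilde h_{t+1}^j$; and (2) $\mathbb{E}^g[R_t^j\mid h_t^j,u_t^j]=\mathbb{E}^{\rho^i,g^{-i}}[R_t^j\mid h_t^j,u_t^j]$ for all $t$.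
   Context: Game model: finite set of players $\mathcal{I}$, times $\mathcal{T}=\{1,\dots,T\}$. At time $t$ each player $i$ takes action $U_t^i\in\mathcal{U}_t^i$, obtains reward $R_t^i\in[-1,1]$ and learns new information $Z_t^i\in\mathcal{Z}_t^i$. There is a state $X_t\in\mathcal{X}_t$ with $(X_{t+1},Z_t,R_t)=f_t(X_t,U_t,W_t)$ for fixed functions $f_t$. Primitive random variables $(X_1,H_1)$ and $W_1,\dots,W_T$ are mutually independent with commonly known distributions. All sets are finite. Perfect recall: $H_t^i=(H_1^i,Z_{1:t-1}^i)\in\mathcal{H}_t^i$, and $U_t^i$ is a component of $Z_t^i$. Behavioral strategy $g_t^i:\mathcal{H}_t^i\to\Delta(\mathcal{U}_t^i)$; a profile is fully mixed if every action has positive probability at every history. A realization is admissible under $g$ if it has positive probability under $g$. Compression: $K_1^i=\iota_1^i(H_1^i)$, $K_t^i=\iota_t^i(K_{t-1}^i,Z_{t-1}^i)$ for fixed maps, finite value sets $\mathcal{K}_t^i$; $k_t^i$ is the compression of $h_t^i$; a $K^i$-based strategy has $\rho_t^i:\mathcal{K}_t^i\to\Delta(\mathcal{U}_t^i)$. Unilaterally sufficient information (USI): $K^i$ is USI for player $i$ if there exist $F_t^{i,g^i}:\mathcal{K}_t^i\to\Delta(\mathcal{H}_t^i)$ depending only on $g^i$ and $\Phi_t^{i,g^{-i}}:\mathcal{K}_t^i\to\Delta(\mathcal{X}_t\times\mathcal{H}_t^{-i})$ depending only on $g^{-i}$ with $\Pr^g(x_t,h_t\mid k_t^i)=F_t^{i,g^i}(h_t^i\mid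 k_t^i)\Phi_t^{i,g^{-i}}(x_t,h_t^{-i}\mid k_t^i)$ for all behavioral profiles $g$, all $t$, all $k_t^i$ admissible under $g$ (with $x_t,h_t^i,h_t^{-i}$ ranging independently; the left side is $0$ if they disagree on shared components). *)

From HB Require Import structures.
From mathcomp Require Import all_boot all_order all_algebra.
Set Implicit Arguments. Unset Strict Implicit. Unset Printing Implicit Defensive.
Import Order.TTheory GRing.Theory Num.Theory.
Local Open Scope ring_scope.

(* Time is indexed from 0: paper time t = 1..T corresponds to t = 0..T-1 here. *)
Record game (R : realFieldType) := Game {
  Pl : finType;
  Tm : nat;
  X : nat -> finType;
  U : Pl -> nat -> finType;
  Z : Pl -> nat -> finType;
  W : nat -> finType;
  H1 : Pl -> finType;
  (* (X_{t+1}, Z_t, R_t) = f_t(X_t, U_t, W_t) *)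
  dyn : forall t, X t -> {dffun forall i : Pl, U i t} -> W t ->
          (X t.+1 * {dffun forall i : Pl, Z i t} * {ffun Pl -> R})%type;
  P1 : X 0 -> {dffun forall i : Pl, H1 i} -> R;
  PW : forall t, W t -> R;
  act_of : forall i t, Z i t -> U i t             (* U_t^i is a component of Z_t^i *)
}.

Arguments Pl {R} g. Arguments Tm {R} g. Arguments X {R} g t. Arguments U {R} g i t.
Arguments Z {R} g i t. Arguments W {R} g t. Arguments H1 {R} g i.
Arguments dyn {R} g {t}. Arguments P1 {R} g. Arguments PW {R} g {t}.
Arguments act_of {R} g {i t}.

Section Game.
Variable (R : realFieldType) (G : game R).

Definition is_dist (S : finType) (p : S -> R) :=
  (forall s, 0 <= p s) /\ \sum_(s : S) p s = 1.

Definition valid_game :=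
  [/\ is_dist (fun xh : (X G 0 * {dffun forall i : Pl G, H1 G i})%type => P1 G xh.1 xh.2),
      (forall t, is_dist (@PW R G t)),
      (forall t (x : X G t) u w, forall i : Pl G, act_of G ((dyn G x u w).1.2 i) = u i) &
      (forall t x u w, forall i : Pl G, -1 <= (dyn G (t:=t) x u w).2 i <= 1)].

(* Perfect recall: H_t^i = (H_1^i, Z_{1:t-1}^i), built as nested pairs. *)
Fixpoint Hist (i : Pl G) (t : nat) : finType :=
  match t with 0 => H1 G i | t'.+1 => (Hist i t' * Z G i t')%type : finType end.

Definition JH t := {dffun forall i : Pl G, Hist i t}.
Definition JU t := {dffun forall i : Pl G, U G i t}.

Definition next_hist t (h : JH t) (z : {dffun forall i : Pl G, Z G i t}) : JH t.+1 :=
  [ffun j => ((h j, z j) : Hist j t.+1)].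

Definition strat (i : Pl G) := forall t, Hist i t -> U G i t -> R.
Definition profile := forall i : Pl G, strat i.

Definition behavioral i (s : strat i) := forall t (h : Hist i t), is_dist (s t h).
Definition behavioral_profile (g : profile) := forall i, behavioral (g i).
Definition fully_mixed (g : profile) :=
  behavioral_profile g /\ forall i t (h : Hist i t) u, 0 < g i t h u.

Fixpoint Pxh (g : profile) (t : nat) : X G t -> JH t -> R :=
  match t return X G t -> JH t -> R with
  | 0 => fun x h => P1 G x h
  | t'.+1 => fun x' h' =>
     \sum_(x : X G t') \sum_(h : JH t') \sum_(u : JU t') \sum_(w : W G t')
       (Pxh g x h * (\prod_(j : Pl G) g j t' (h j) (u j)) * PW G w) *
       ((((dyn G x u w).1.1 == x') && (next_hist h (dyn G x u w).1.2 == h')) %:R)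
  end.

Definition Q (g : profile) t (x : X G t) (h : JH t) (u : JU t) (w : W G t) : R :=
  Pxh g x h * (\prod_(j : Pl G) g j t (h j) (u j)) * PW G w.

Definition Pr_hu (g : profile) t j (hj : Hist j t) (uj : U G j t) : R :=
  \sum_(x : X G t) \sum_(h : JH t) \sum_(u : JU t) \sum_(w : W G t)
    Q g x h u w * ((h j == hj) && (u j == uj))%:R.

Definition Pr_next_hu (g : profile) t j (hj : Hist j t) (uj : U G j t)
    (hj' : Hist j t.+1) : R :=
  \sum_(x : X G t) \sum_(h : JH t) \sum_(u : JU t) \sum_(w : W G t)
    Q g x h u w * [&& h j == hj, u j == uj &
                      ((h j, (dyn G x u w).1.2 j) : Hist j t.+1) == hj']%:R.

Definition cond_next (g : profile) t (j : Pl G) (hj : Hist j t) (uj : U G j t)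
    (hj' : Hist j t.+1) : R :=
  Pr_next_hu g hj uj hj' / Pr_hu g (t:=t) hj uj.

Definition cond_reward (g : profile) t j (hj : Hist j t) (uj : U G j t) : R :=
  (\sum_(x : X G t) \sum_(h : JH t) \sum_(u : JU t) \sum_(w : W G t)
    Q g x h u w * ((h j == hj) && (u j == uj))%:R * (dyn G x u w).2 j)
  / Pr_hu g hj uj.

Section Compression.
Variables (i : Pl G) (K : nat -> finType)
          (iota1 : H1 G i -> K 0) (iota : forall t, K t -> Z G i t -> K t.+1).

Fixpoint compress (t : nat) : Hist i t -> K t :=
  match t return Hist i t -> K t with
  | 0 => fun h => iota1 h
  | t'.+1 => fun h => iota (compress h.1) h.2
  end.

Definition Pr_k (g : profile) t (k : K t) : R :=
  \sum_(x : X G t) \sum_(h : JH t) Pxh g x h * (compress (h i) == k)%:R.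

Definition cond_xh_k (g : profile) t (k : K t) (x : X G t) (h : JH t) : R :=
  Pxh g x h * (compress (h i) == k)%:R / Pr_k g k.

(* F : depends only on g^i (it takes only player i's strategy);
   Phi : takes the profile but must not depend on g^i, and takes the joint
   history but must only depend on the components h^{-i}. *)
Definition USI
    (F : strat i -> forall t, K t -> Hist i t -> R)
    (Phi : profile -> forall t, K t -> X G t -> JH t -> R) :=
  [/\ (forall gi, behavioral gi -> forall t (k : K t), is_dist (F gi t k)),
      (forall g, behavioral_profile g -> forall t (k : K t) (hi0 : Hist i t),
          (forall x h, 0 <= Phi g t k x h) /\
          \sum_(x : X G t) \sum_(h : JH t) Phi g t k x h * (h i == hi0)%:R = 1),
      (forall g g' : profile, (forall j, j != i -> g j = g' j) -> Phi g = Phi g'),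
      (forall g t (k : K t) x (h h' : JH t), (forall j, j != i -> h j = h' j) ->
          Phi g t k x h = Phi g t k x h') &
      (forall g, behavioral_profile g -> forall t, (t < Tm G)%N ->
        forall k : K t, 0 < Pr_k g k ->
        forall x (h : JH t), cond_xh_k g k x h = F (g i) t k (h i) * Phi g t k x h)].

Definition rho (F : strat i -> forall t, K t -> Hist i t -> R) (gi : strat i) :
    strat i :=
  fun t h u => \sum_(h' : Hist i t) gi t h' u * F gi t (compress h) h'.

End Compression.
End Game.

From HB Require Import structures.
From mathcomp Require Import all_boot all_order all_algebra all_fingroup.
From mathcomp Require Import ring.
Import Order.TTheory GRing.Theory Num.Theory.
Local Open Scope ring_scope.

(* Call a function of (X_t, H_t) K-measurable if it depends on H_t^i only
   through K_t^i.  By induction on t, g and g' := (rho^i, g^{-i}) give every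
   K-measurable function the same expectation.  In the inductive step the
   one-step laws under g and g' differ only in the factor g^i(u^i | H_t^i),
   replaced by rho^i(u^i | K_t^i).  By the USI factorisation, conditionally on
   K_t^i = k the history H_t^i is independent of (X_t, H_t^{-i}) and has law
   F(. | k); hence against a K-measurable weight g^i(u^i | H_t^i) only enters
   through its F(. | k)-average, which is rho^i(u^i | k).  For j <> i, player
   j's transition and reward numerators and denominators are expectations of
   functions of (H_t^j, U_t^j, X_t, W_t), which are K-measurable. *)

Lemma sum_mul_indicator {R : pzSemiRingType} {T : finType} (a : T) (f : T -> R) :
  \sum_(x : T) f x * (a == x)%:R = f a.
Proof.
rewrite (bigD1 a) //= eqxx mulr1 big1 ?addr0 // => x /negbTE.
by rewrite eq_sym => ->; rewrite mulr0.
Qed.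

Lemma pair_big4 {R : nmodType} {A B C D : finType} (f : A -> B -> C -> D -> R) :
  \sum_a \sum_b \sum_c \sum_d f a b c d =
  \sum_(p : A * (B * C * D)) f p.1 p.2.1.1 p.2.1.2 p.2.2.
Proof.
under eq_bigr do rewrite pair_big /= pair_big /=.
by rewrite pair_big.
Qed.

Section CoordinateSlices.
Context {I : finType} {T : I -> finType} (i : I).

Definition dfupd (h : {dffun forall j, T j}) (y : T i) : {dffun forall j, T j} :=
  finfun (dfwith h y).

Lemma dfupd_in h y : dfupd h y i = y.
Proof. by rewrite ffunE dfwith_in. Qed.

Lemma dfupd_out h y j : j != i -> dfupd h y j = h j.
Proof. by move=> ji; rewrite ffunE dfwith_out // eq_sym. Qed.

Definition agree_off (h h' : {dffun forall j, T j}) := forall j, j != i -> h j = h' j.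

Context {S : Type} (c : T i -> S).

Definition coarse_at {V : Type} (b : {dffun forall j, T j} -> V) :=
  forall h h', agree_off h h' -> c (h i) = c (h' i) -> b h = b h'.

Lemma sum_slice_coarse {R : nmodType} {b : {dffun forall j, T j} -> R} {y y' : T i} :
  coarse_at b -> c y = c y' ->
  \sum_(h : {dffun forall j, T j} | h i == y) b h =
  \sum_(h : {dffun forall j, T j} | h i == y') b h.
Proof.
move=> Hb cyy'.
pose sw h := dfupd h (tperm y y' (h i)).
have swK : involutive sw.
  move=> h; apply/ffunP => j; rewrite /sw.
  by case: (eqVneq j i) => [->|ji]; rewrite ?dfupd_in ?tpermK // !dfupd_out.
have swE h : (sw h i == y) = (h i == y').
  by rewrite /sw dfupd_in -[X in _ == X](tpermR y y') (can_eq (tpermK y y')).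
rewrite (reindex_inj (can_inj swK)); apply: eq_big => h; rewrite swE // => /eqP hy'.
apply: Hb => [j ji|]; first by rewrite dfupd_out.
by rewrite dfupd_in hy' tpermR.
Qed.

Lemma sum_factor_coarse {R : pzSemiRingType} (a : T i -> R)
    (b : {dffun forall j, T j} -> R) (y0 : T i) :
  coarse_at b -> (forall y, a y != 0 -> c y = c y0) ->
  \sum_(h : {dffun forall j, T j}) a (h i) * b h =
  (\sum_y a y) * \sum_(h : {dffun forall j, T j} | h i == y0) b h.
Proof.
move=> Hb Ha; rewrite (partition_big (fun h : {dffun forall j, T j} => h i) xpredT) //.
rewrite big_distrl; apply: eq_bigr => y _ /=.
rewrite (eq_bigr (fun h => a y * b h)) => [|h /eqP -> //].
rewrite -big_distrr /=; have [->|/Ha cy] := eqVneq (a y) 0; first by rewrite !mul0r.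
by rewrite (sum_slice_coarse Hb cy).
Qed.

End CoordinateSlices.

Section GameLaws.
Context {R : realFieldType} {G : game R}.

Definition expect (g : profile G) {t} (phi : X G t -> JH G t -> R) :=
  \sum_x \sum_(h : JH G t) Pxh g x h * phi x h.

Definition expectQ (g : profile G) {t} (psi : X G t -> JH G t -> JU G t -> W G t -> R) :=
  \sum_x \sum_(h : JH G t) \sum_(u : JU G t) \sum_(w : W G t) Q g x h u w * psi x h u w.

Lemma Pxh_ge0 (g : profile G) t x h :
  valid_game G -> behavioral_profile g -> 0 <= Pxh g (t:=t) x h.
Proof.
case=> P1_dist PW_dist _ _ Hg; elim: t x h => [|t IH] x h /=; first exact: P1_dist.1 (x, h).
do 4 (apply: sumr_ge0 => ? _); rewrite !mulr_ge0 ?ler0n ?(PW_dist t).1 //.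
by apply: prodr_ge0 => j _; apply: (Hg j t _).1.
Qed.

Lemma expect_succ (g : profile G) t (phi : X G t.+1 -> JH G t.+1 -> R) :
  expect g phi =
  expectQ g (fun x h u w => phi (dyn G x u w).1.1 (next_hist h (dyn G x u w).1.2)).
Proof.
pose T (p : X G t * (JH G t * JU G t * W G t)) (q : X G t.+1 * JH G t.+1) :=
  let: x := p.1 in let: h := p.2.1.1 in let: u := p.2.1.2 in let: w := p.2.2 in
  Q g x h u w * (((dyn G x u w).1.1 == q.1) && (next_hist h (dyn G x u w).1.2 == q.2))%:R
  * phi q.1 q.2.
transitivity (\sum_q \sum_p T p q).
  by rewrite /expect pair_bigA; apply: eq_bigr => q _; rewrite /= pair_big4 mulr_suml.
rewrite exchange_big /expectQ pair_big4; apply: eq_bigr => -[x [[h u] w]] _ /=.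
rewrite -(pair_bigA _ (fun x' h' => T (x, (h, u, w)) (x', h'))) /T /=.
under eq_bigr do under eq_bigr do rewrite mulrAC -mulnb natrM mulrA.
by under eq_bigr do rewrite sum_mul_indicator; rewrite sum_mul_indicator.
Qed.

Lemma expectQ_expect (g : profile G) t
    (psi : X G t -> JH G t -> JU G t -> W G t -> R) :
  expectQ g psi = \sum_(u : JU G t) \sum_(w : W G t)
    expect g (fun x h => (\prod_j g j t (h j) (u j)) * PW G w * psi x h u w).
Proof.
transitivity (\sum_x \sum_(u : JU G t) \sum_(w : W G t) \sum_(h : JH G t)
                Q g x h u w * psi x h u w).
  apply: eq_bigr => x _; rewrite exchange_big; apply: eq_bigr => u _; exact: exchange_big.
rewrite exchange_big; apply: eq_bigr => u _; rewrite exchange_big.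
by do 3 (apply: eq_bigr => ? _); rewrite /Q !mulrA.
Qed.

Lemma expectQ_mulA (g : profile G) t (a b : X G t -> JH G t -> JU G t -> W G t -> R) :
  \sum_x \sum_(h : JH G t) \sum_(u : JU G t) \sum_(w : W G t)
    Q g x h u w * a x h u w * b x h u w =
  expectQ g (fun x h u w => a x h u w * b x h u w).
Proof. by do 4 (apply: eq_bigr => ? _); rewrite mulrA. Qed.

End GameLaws.

Section Invariance.
Variables (R : realFieldType) (G : game R) (i : Pl G)
    (K : nat -> finType) (iota1 : H1 G i -> K 0)
    (iota : forall t, K t -> Z G i t -> K t.+1)
    (F : strat i -> forall t, K t -> Hist i t -> R)
    (Phi : profile G -> forall t, K t -> X G t -> JH G t -> R)
    (g : profile G).
Hypotheses (HV : valid_game G) (HU : USI iota1 iota F Phi) (Hg : behavioral_profile g).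

Local Notation c := (compress iota1 iota).
Local Notation rho_i := (rho iota1 iota F (g i)).
Local Notation g' := (dfwith g rho_i).
Local Notation Pr_k := (Pr_k iota1 iota g).

Definition K_measurable {t} (phi : X G t -> JH G t -> R) :=
  forall x, coarse_at i (@c t) (phi x).

Lemma Pr_k_ge0 t (k : K t) : 0 <= Pr_k k.
Proof. by do 2 (apply: sumr_ge0 => ? _); rewrite mulr_ge0 ?ler0n ?Pxh_ge0. Qed.

Lemma expect_partition_K t (phi : X G t -> JH G t -> R) :
  expect g phi = \sum_(k : K t) expect g (fun x h => (c (h i) == k)%:R * phi x h).
Proof.
rewrite exchange_big; apply: eq_bigr => x _; rewrite exchange_big; apply: eq_bigr => h _.
rewrite -(sum_mul_indicator (c (h i)) (fun=> Pxh g x h * phi x h)).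
by apply: eq_bigr => k _; rewrite mulrCA mulrC.
Qed.

Lemma expect_event_null t (k : K t) (phi : X G t -> JH G t -> R) :
  Pr_k k = 0 -> expect g (fun x h => (c (h i) == k)%:R * phi x h) = 0.
Proof.
move=> Pk0; apply: big1 => x _; apply: big1 => h _.
have term_ge0 x' h' : 0 <= Pxh g x' h' * (c (h' i) == k)%:R.
  by rewrite mulr_ge0 ?ler0n ?Pxh_ge0.
have row_ge0 x' : 0 <= \sum_(h' : JH G t) Pxh g x' h' * (c (h' i) == k)%:R.
  by apply: sumr_ge0 => h' _; exact: term_ge0.
have row0 := psumr_eq0P (fun x' _ => row_ge0 x') Pk0 (i := x) isT.
have := psumr_eq0P (fun h' _ => term_ge0 x h') row0 (i := h) isT.
by rewrite mulrA => ->; rewrite mul0r.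
Qed.

Lemma Pxh_event_factor t (k : K t) (x : X G t) (h : JH G t) :
  (t < Tm G)%N -> 0 < Pr_k k ->
  Pxh g x h * (c (h i) == k)%:R = Pr_k k * (F (g i) t k (h i) * Phi g t k x h).
Proof.
have [_ _ _ _ Hfac] := HU; move=> lt Pk_gt0.
by rewrite -(Hfac g Hg t lt k Pk_gt0) /cond_xh_k [RHS]mulrC divfK ?lt0r_neq0.
Qed.

Lemma F_support {t} {k : K t} {y : Hist i t} :
  (t < Tm G)%N -> 0 < Pr_k k -> F (g i) t k y != 0 -> c y = k.
Proof.
have [_ HPhi _ _ _] := HU; move=> lt Pk_gt0 Fy; apply/eqP; apply: contraNT Fy => cyk.
apply/eqP; rewrite -(mulr1 (F (g i) t k y)); have [_ <-] := HPhi g Hg t k y.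
rewrite mulr_sumr big1 // => x _.
rewrite mulr_sumr big1 // => h _; have [hy|_] := eqVneq (h i) y; last by rewrite !mulr0.
apply: (mulfI (lt0r_neq0 Pk_gt0)).
by rewrite mulr1 mulr0 -hy -Pxh_event_factor // hy (negbTE cyk) mulr0.
Qed.

Lemma expect_event_factor {t} {k : K t} {B : X G t -> JH G t -> R} :
  (t < Tm G)%N -> 0 < Pr_k k -> K_measurable B ->
  exists C, forall a : Hist i t -> R,
    expect g (fun x h => (c (h i) == k)%:R * (a (h i) * B x h)) =
    (\sum_y F (g i) t k y * a y) * C.
Proof.
have [HFd _ _ HPhih _] := HU; move=> lt Pk_gt0 HB.
have [y0 /(F_support lt Pk_gt0) cy0] : exists y0, F (g i) t k y0 != 0.
  have [F_ge0 F_sum1] := HFd _ (Hg i) t k.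
  have /psumr_neq0P[|y /andP[_ /lt0r_neq0]] : \sum_y F (g i) t k y <> 0.
  - by rewrite F_sum1; exact/eqP/oner_neq0.
  - by move=> y _; exact: F_ge0.
  by exists y.
exists (\sum_x \sum_(h : JH G t | h i == y0) Pr_k k * (Phi g t k x h * B x h)) => a.
rewrite mulr_sumr; apply: eq_bigr => x _.
transitivity (\sum_(h : JH G t)
  F (g i) t k (h i) * a (h i) * (Pr_k k * (Phi g t k x h * B x h))).
  by apply: eq_bigr => h _; rewrite mulrA Pxh_event_factor //; ring.
apply: (sum_factor_coarse i (@c t)) => [h h' hh' ch|y].
  by rewrite (HPhih g t k x h h' hh') (HB x h h' hh' ch).
by rewrite mulf_eq0 negb_or cy0 => /andP[/(F_support lt Pk_gt0) ->].
Qed.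

Lemma F_avg_rho t (k : K t) (v : U G i t) : (t < Tm G)%N -> 0 < Pr_k k ->
  \sum_y F (g i) t k y * rho_i y v = \sum_y F (g i) t k y * g i t y v.
Proof.
have [HFd _ _ _ _] := HU; move=> lt Pk_gt0.
transitivity (\sum_y F (g i) t k y * \sum_y' g i t y' v * F (g i) t k y').
  apply: eq_bigr => y _.
  have [->|/(F_support lt Pk_gt0) cy] := eqVneq (F (g i) t k y) 0; first by rewrite !mul0r.
  by rewrite /rho cy.
by rewrite -big_distrl /= (HFd _ (Hg i) t k).2 mul1r; apply: eq_bigr => y _; exact: mulrC.
Qed.

Lemma expect_strat_rho t (v : U G i t) (B : X G t -> JH G t -> R) :
  (t < Tm G)%N -> K_measurable B ->
  expect g (fun x h => g i t (h i) v * B x h) =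
  expect g (fun x h => rho_i (h i) v * B x h).
Proof.
move=> lt HB; rewrite [LHS]expect_partition_K [RHS]expect_partition_K.
apply: eq_bigr => k _; have [Pk0|Pk_neq0] := eqVneq (Pr_k k) 0.
  by rewrite !expect_event_null.
have Pk_gt0 : 0 < Pr_k k by rewrite lt0r Pk_neq0 Pr_k_ge0.
have [C EC] := expect_event_factor lt Pk_gt0 HB.
by rewrite (EC (fun y => g i t y v)) (EC (fun y => rho_i y v)) F_avg_rho.
Qed.

Definition expect_invariant t :=
  forall phi : X G t -> JH G t -> R, K_measurable phi -> expect g phi = expect g' phi.

Lemma K_measurable_rho t (v : U G i t) (B : X G t -> JH G t -> R) :
  K_measurable B -> K_measurable (fun x h => rho_i (h i) v * B x h).
Proof. by move=> HB x h h' hh' ch; rewrite /= (HB x h h' hh' ch) /rho ch. Qed.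

Lemma K_measurable_succ t (phi : X G t.+1 -> JH G t.+1 -> R) u w :
  K_measurable phi ->
  K_measurable (fun x h => phi (dyn G x u w).1.1 (next_hist h (dyn G x u w).1.2)).
Proof.
move=> Hphi x h h' hh' ch; apply: Hphi => [j ji|]; first by rewrite !ffunE hh'.
by rewrite !ffunE /= ch.
Qed.

Lemma expectQ_invariant_step t (psi : X G t -> JH G t -> JU G t -> W G t -> R) :
  (t < Tm G)%N -> expect_invariant t ->
  (forall u w, K_measurable (fun x h => psi x h u w)) -> expectQ g psi = expectQ g' psi.
Proof.
move=> lt inv Hpsi; rewrite !expectQ_expect; apply: eq_bigr => u _; apply: eq_bigr => w _.
pose B x (h : JH G t) := (\prod_(j | j != i) g j t (h j) (u j)) * PW G w * psi x h u w.
have HB : K_measurable B.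
  move=> x h h' hh' ch; rewrite /B (Hpsi u w x h h' hh' ch); congr (_ * _ * _).
  by apply: eq_bigr => j ji; rewrite hh'.
transitivity (expect g (fun x h => g i t (h i) (u i) * B x h)).
  by do 2 (apply: eq_bigr => ? _); rewrite (bigD1 i) //= /B !mulrA.
rewrite expect_strat_rho // inv; last exact: K_measurable_rho.
do 2 (apply: eq_bigr => ? _); rewrite (bigD1 i) //= dfwith_in /B !mulrA.
by congr (_ * _ * _ * _); apply: eq_bigr => j ji; rewrite dfwith_out // eq_sym.
Qed.

Lemma expect_rho_invariant t : (t <= Tm G)%N -> expect_invariant t.
Proof.
elim: t => [_ phi _ //|t IH lt phi Hphi].
rewrite !expect_succ; apply: expectQ_invariant_step => // [|u w].
  exact: IH (ltnW lt).
exact: K_measurable_succ.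
Qed.

Lemma expectQ_invariant_off_i t (psi : X G t -> JH G t -> JU G t -> W G t -> R) :
  (t < Tm G)%N -> (forall x h h' u w, agree_off i h h' -> psi x h u w = psi x h' u w) ->
  expectQ g psi = expectQ g' psi.
Proof.
move=> lt Hpsi; apply: expectQ_invariant_step => // [|u w x h h' hh' _].
  exact: expect_rho_invariant (ltnW lt).
exact: Hpsi.
Qed.

End Invariance.

Theorem lemma9 (R : realFieldType) (G : game R) (i : Pl G)
    (K : nat -> finType) (iota1 : H1 G i -> K 0)
    (iota : forall t, K t -> Z G i t -> K t.+1)
    (F : strat i -> forall t, K t -> Hist i t -> R)
    (Phi : profile G -> forall t, K t -> X G t -> JH G t -> R)
    (g : profile G) :
  valid_game G ->
  USI iota1 iota F Phi ->
  fully_mixed g ->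
  let g' := dfwith g (rho iota1 iota F (g i)) in
  forall j : Pl G, j != i ->
    (forall t (hj : Hist j t) (uj : U G j t) (hj' : Hist j t.+1),
       (t.+1 < Tm G)%N -> 0 < Pr_hu g hj uj -> 0 < Pr_hu g' hj uj ->
       cond_next g hj uj hj' = cond_next g' hj uj hj')
    /\
    (forall t (hj : Hist j t) (uj : U G j t),
       (t < Tm G)%N -> 0 < Pr_hu g hj uj -> 0 < Pr_hu g' hj uj ->
       cond_reward g hj uj = cond_reward g' hj uj).
Proof.
move=> HV HU [Hg _] g' j ji.
(* Numerators and denominators agree separately. *)
have inv t psi := @expectQ_invariant_off_i R G i K iota1 iota F Phi g HV HU Hg t psi.
have agree_j t (h h' : JH G t) : agree_off i h h' -> h j = h' j by apply.
have Pr_inv t (hj : Hist j t) uj : (t < Tm G)%N -> Pr_hu g hj uj = Pr_hu g' hj uj.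
  by move=> lt; apply: inv => // x h h' u w /agree_j ->.
split=> [t hj uj hj' lt _ _|t hj uj lt _ _].
  rewrite /cond_next Pr_inv 1?ltnW //; congr (_ / _).
  by apply: inv => [|x h h' u w /agree_j ->]; first exact: ltnW.
rewrite /cond_reward Pr_inv // !expectQ_mulA; congr (_ / _).
by apply: inv => // x h h' u w /agree_j ->.
Qed.
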